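(* Let $m\ge2$, $n\ge2$, and let $\mathcal{A}\in\mathbb{S}_{m,n}$ be a Hankel tensor with generating vector $v=(v_0,\dots,v_{(n-1)m})^T$. (i) If $v_0=v_{(n-1)m}=0$, then $\mathcal{A}$ is completely positive if and only if $\mathcal{A}$ is the zero tensor. (ii) If $n\ge3$, $\mathcal{A}$ is completely positive, and $v_{(i-1)m}=0$ for some $2\le i\le n-1$, then $v_0\ge0$, $v_{(n-1)m}\ge0$ and $\mathcal{A}=v_0(e^{(1)})^m+v_{(n-1)m}(e^{(n)})^m$. (iii) If $v_0=0$ and $v_j\ne0$ for some $j\in[m-1]$, then $\mathcal{A}$ is not completely positive.
   Context: $\mathcal{A}=(a_{i_1\ldots i_m})\in\mathbb{S}_{m,n}$ is a Hankel tensor with generating vector $v$ if $a_{i_1\ldots i_m}=v_{i_1+\dots+i_m-m}$ for all $i_1,\dots,i_m\in[n]$. $e^{(i)}$ is the $i$th standard basis vector of $\mathbb{R}^n$; $(u^m)_{i_1\ldots i_m}=u_{i_1}\cdots u_{i_m}$. A tensor $\mathcal{A}\in\mathbb{S}_{m,n}$ is completely positive if $\mathcal{A}=\sum_{k=1}^r(u^{(k)})^m$ for some $r\ge1$ and $u^{(k)}\in\mathbb{R}^n_+$. *)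

From HB Require Import structures.
From mathcomp Require Import all_boot all_order all_algebra all_fingroup.
Set Implicit Arguments. Unset Strict Implicit. Unset Printing Implicit Defensive.
Import Order.TTheory GRing.Theory Num.Theory.
Local Open Scope ring_scope.

(* An order-m, dimension-n tensor; indices are 0-based: idx : 'I_m -> 'I_n. *)
Definition tensor (R : Type) (m n : nat) := {ffun 'I_m -> 'I_n} -> R.

Definition is_symmetric (R : Type) (m n : nat) (A : tensor R m n) : Prop :=
  forall (idx : {ffun 'I_m -> 'I_n}) (s : 'S_m), A [ffun k => idx (s k)] = A idx.

(* Hankel with generating vector v (0-based: a_{i_1..i_m} = v_{i_1+..+i_m}). *)
Definition is_hankel (R : Type) (m n : nat) (A : tensor R m n) (v : nat -> R) : Prop :=
  forall idx : {ffun 'I_m -> 'I_n}, A idx = v (\sum_(k < m) nat_of_ord (idx k))%N.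

Definition tpow (R : numDomainType) (m : nat) (n : nat) (u : 'I_n -> R) : tensor R m n :=
  fun idx => \prod_(k < m) u (idx k).
Arguments tpow {R} m {n} u idx.

Definition ebasis (R : numDomainType) (n i : nat) : 'I_n -> R :=
  fun j => ((nat_of_ord j == i)%N)%:R.

Definition completely_positive (R : numDomainType) (m n : nat) (A : tensor R m n) : Prop :=
  exists (r : nat) (us : 'I_r -> 'I_n -> R),
    (1 <= r)%N /\ (forall k i, 0 <= us k i) /\
    forall idx, A idx = \sum_(k < r) tpow m (us k) idx.

Definition zero_tensor (R : numDomainType) (m n : nat) (A : tensor R m n) : Prop :=
  forall idx, A idx = 0.
Arguments ebasis {R} n i j.

(* Write A = sum_k u_k^m with u_k >= 0.  The diagonal entry v_{(i-1)m} equals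
   sum_k u_k(i)^m, so it is nonnegative, and it vanishes only if the whole
   coordinate i of every u_k vanishes.  A vanishing coordinate j kills every
   entry of A having an index equal to j, and these entries realize every
   index sum between j and j + (m-1)(n-1); so v vanishes on that window.
   Vanishing windows contain further diagonal positions, which propagates
   vanishing along the coordinates, and two windows together cover all of
   the generating vector in (i), and all of it except its two ends in (ii). *)
From HB Require Import structures.
From mathcomp Require Import all_boot all_order all_algebra all_fingroup.
From mathcomp Require Import zify.
Set Implicit Arguments. Unset Strict Implicit. Unset Printing Implicit Defensive.
Import Order.TTheory GRing.Theory Num.Theory.
Local Open Scope ring_scope.

Lemma index_sum_le m n (idx : {ffun 'I_m -> 'I_n}) :
  (\sum_(k < m) idx k <= (n - 1) * m)%N.
Proof.
rewrite mulnC -[X in (X * _)%N]card_ord -sum_nat_const.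
by apply: leq_sum => k _; have := ltn_ord (idx k); lia.
Qed.

Lemma index_sum_lt m n (idx : {ffun 'I_m -> 'I_n}) (k : 'I_m) :
  (idx k != (n - 1)%N :> nat) -> (\sum_(l < m) idx l < (n - 1) * m)%N.
Proof.
move=> idx_k; rewrite mulnC -[X in (X * _)%N]card_ord -sum_nat_const.
rewrite (bigD1 k) //= [X in (_ < X)%N](bigD1 k) //= -addSn leq_add //.
  by have := ltn_ord (idx k); lia.
by apply: leq_sum => l _; have := ltn_ord (idx l); lia.
Qed.

Lemma index_sum_gt0 m n (idx : {ffun 'I_m -> 'I_n}) (k : 'I_m) :
  (idx k != 0 :> nat) -> (0 < \sum_(l < m) idx l)%N.
Proof. by move=> idx_k; rewrite (bigD1 k) //= addn_gt0 lt0n idx_k. Qed.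

Lemma index_sum_const m n (idx : {ffun 'I_m -> 'I_n}) c :
  (forall k, idx k = c :> nat) -> (\sum_(k < m) idx k = c * m)%N.
Proof.
by move=> idx_c; rewrite (eq_bigr _ (fun k _ => idx_c k)) sum_nat_const card_ord mulnC.
Qed.

Lemma mul_pred_split m n : (0 < m)%N -> ((n - 1) * m = (m - 1) * (n - 1) + (n - 1))%N.
Proof. by move=> m_gt0; rewrite -{1}(subnK m_gt0) mulnDr muln1 mulnC. Qed.

(* Slot 0 holds j; the remaining slots are filled greedily with n - 1 until
   the rest s - j of the sum is used up. *)
Definition greedy_fill (n t k : nat) : nat := minn (n - 1) (t - (n - 1) * k).

Lemma sum_greedy_fill n t p :
  (\sum_(k < p) greedy_fill n t k = minn t ((n - 1) * p))%N.
Proof.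
elim: p => [|p IHp]; first by rewrite big_ord0; lia.
by rewrite big_ord_recr /= IHp /greedy_fill mulnS; lia.
Qed.

Lemma exists_index_sum m n j s : (0 < m)%N -> (j < n)%N ->
  (j <= s <= j + (m - 1) * (n - 1))%N ->
  exists2 idx : {ffun 'I_m -> 'I_n},
    exists k, idx k = j :> nat & (\sum_(k < m) idx k = s)%N.
Proof.
case: m => [//|m] _ lt_jn /andP[le_js le_s].
pose f k := if k is k'.+1 then greedy_fill n (s - j) k' else j.
have lt_fn k : (f k < n)%N by case: k => [|k] //=; rewrite /greedy_fill; lia.
exists [ffun k : 'I_m.+1 => Ordinal (lt_fn k)]; first by exists ord0; rewrite ffunE.
rewrite big_ord_recl ffunE /=.
under eq_bigr => k _ do rewrite ffunE /=.
by rewrite sum_greedy_fill; move: le_s; rewrite subn1 /= mulnC; lia.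
Qed.

Lemma tpow_eq0 (R : numDomainType) m n (u : 'I_n -> R) (idx : {ffun 'I_m -> 'I_n}) k :
  u (idx k) = 0 -> tpow m u idx = 0.
Proof. by move=> u_idx; rewrite /tpow (bigD1 k) //= u_idx mul0r. Qed.

Lemma tpow_const (R : numDomainType) m n (u : 'I_n -> R) (i : 'I_n) :
  tpow m u [ffun=> i] = u i ^+ m.
Proof.
by rewrite /tpow; under eq_bigr => k _ do rewrite ffunE; rewrite prodr_const card_ord.
Qed.

Lemma tpow_ebasis (R : numDomainType) m n i (idx : {ffun 'I_m -> 'I_n}) :
  tpow m (ebasis n i) idx = [forall k, idx k == i :> nat]%:R :> R.
Proof.
case: forallP => [idx_i | /forallP]; first by rewrite /tpow big1 // => k _; rewrite /ebasis idx_i.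
rewrite negb_forall => /existsP[k idx_k].
by apply: (tpow_eq0 (k := k)); rewrite /ebasis (negbTE idx_k).
Qed.

Lemma zero_tensor_completely_positive (R : numDomainType) m n (A : tensor R m n) :
  (0 < m)%N -> zero_tensor A -> completely_positive A.
Proof.
move=> m_gt0 A0; exists 1%N, (fun _ _ => 0); split => //; split => // idx.
by rewrite A0 big_ord1 (tpow_eq0 (k := Ordinal m_gt0)).
Qed.

Section HankelDecomposition.

Variables (R : numDomainType) (m n : nat) (A : tensor R m n) (v : nat -> R).
Variables (r : nat) (us : 'I_r -> 'I_n -> R).
Hypothesis m_gt0 : (0 < m)%N.
Hypothesis hankelA : is_hankel A v.
Hypothesis decA : forall idx, A idx = \sum_(k < r) tpow m (us k) idx.
Hypothesis us_ge0 : forall k i, 0 <= us k i.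

Definition zero_coord (j : nat) := forall k (i : 'I_n), i = j :> nat -> us k i = 0.

Lemma hankel_diag (i : 'I_n) : v (i * m)%N = \sum_(k < r) us k i ^+ m.
Proof.
have sum_i : (\sum_(k < m) [ffun=> i] k = i * m)%N.
  by apply: index_sum_const => k; rewrite ffunE.
by rewrite -sum_i -hankelA decA; apply: eq_bigr => k _; rewrite tpow_const.
Qed.

Lemma hankel_diag_ge0 (i : 'I_n) : 0 <= v (i * m)%N.
Proof. by rewrite hankel_diag sumr_ge0 // => k _; rewrite exprn_ge0. Qed.

Lemma hankel_diag_eq0 j : v (j * m)%N = 0 -> zero_coord j.
Proof.
move=> + k i ij; rewrite -ij hankel_diag => /psumr_eq0P us_i.
have /eqP := us_i (fun l _ => exprn_ge0 _ (us_ge0 l i)) k isT.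
by rewrite expf_eq0 m_gt0 => /eqP.
Qed.

Lemma zero_coord_hankel_eq0 j s : zero_coord j -> (j < n)%N ->
  (j <= s <= j + (m - 1) * (n - 1))%N -> v s = 0.
Proof.
move=> zj lt_jn js; have [idx [k idx_k] <-] := exists_index_sum m_gt0 lt_jn js.
by rewrite -hankelA decA big1 // => l _; apply: (tpow_eq0 (k := k)); apply: zj.
Qed.

Lemma zero_coord_spread j j' : zero_coord j -> (j < n)%N ->
  (j <= j' * m <= j + (m - 1) * (n - 1))%N -> zero_coord j'.
Proof. by move=> zj lt_jn jj'; apply/hankel_diag_eq0/(zero_coord_hankel_eq0 zj). Qed.

Lemma zero_coord_pair_hankel_eq0 a b s : zero_coord a -> zero_coord b ->
  (a < n)%N -> (b < n)%N -> (b <= a + (m - 1) * (n - 1) + 1)%N ->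
  (a <= s <= b + (m - 1) * (n - 1))%N -> v s = 0.
Proof.
move=> za zb lt_an lt_bn ab /andP[le_as le_sb].
have [le_s_a | lt_a_s] := leqP s (a + (m - 1) * (n - 1)).
  by apply: (zero_coord_hankel_eq0 za); rewrite ?le_as.
by apply: (zero_coord_hankel_eq0 zb); rewrite ?le_sb //; lia.
Qed.

Lemma zero_coord_interior i : (2 <= m)%N -> (1 <= i <= n - 2)%N -> zero_coord i ->
  forall j, (1 <= j <= n - 2)%N -> zero_coord j.
Proof.
move=> m_ge2 i_in zi.
have up d : (i + d <= n - 2)%N -> zero_coord (i + d).
  elim: d => [|d IHd] id; first by rewrite addn0.
  by apply: (zero_coord_spread (IHd _)); rewrite ?addnS; nia.
have down d : (d < i)%N -> zero_coord (i - d).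
  elim: d => [|d IHd] di; first by rewrite subn0.
  by apply: (zero_coord_spread (IHd _)); rewrite ?subnS; nia.
move=> j j_in; have [le_ij | lt_ji] := leqP i j.
  by rewrite -(subnKC le_ij); apply: up; lia.
by rewrite -[j](subKn (ltnW lt_ji)); apply: down; lia.
Qed.

Lemma hankel_supported_on_ends : (2 <= m)%N -> (3 <= n)%N -> zero_coord 1 -> zero_coord (n - 2) ->
  forall idx, A idx = v 0%N * tpow m (ebasis n 0) idx
                      + v ((n - 1) * m)%N * tpow m (ebasis n (n - 1)) idx.
Proof.
move=> m_ge2 n_ge3 z1 zn2 idx; rewrite hankelA !tpow_ebasis.
case: forallP => [idx0 | /forallP]; last rewrite negb_forall => /existsP[k idx_k].
  rewrite (index_sum_const (fun k => eqP (idx0 k))) mul0n mulr1.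
  have -> : [forall k, idx k == (n - 1)%N :> nat] = false.
    by apply/negbTE/forallP => /(_ (Ordinal m_gt0)); rewrite (eqP (idx0 _)); lia.
  by rewrite mulr0 addr0.
case: forallP => [idxN | /forallP].
  by rewrite (index_sum_const (fun k => eqP (idxN k))) mulr0 mulr1 add0r.
rewrite negb_forall => /existsP[l idx_l]; rewrite !mulr0 addr0.
have mn_ge : (n - 1 <= (m - 1) * (n - 1))%N by rewrite leq_pmull; lia.
have mn_split := mul_pred_split n m_gt0.
apply: (zero_coord_pair_hankel_eq0 z1 zn2); [lia | lia | lia |].
by have := index_sum_gt0 idx_k; have := index_sum_lt idx_l; lia.
Qed.

End HankelDecomposition.

Theorem mainTheorem6 (R : realFieldType) (m n : nat) (A : tensor R m n) (v : nat -> R) :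
  (2 <= m)%N -> (2 <= n)%N -> is_symmetric A -> is_hankel A v ->
  (* (i) *)
  ((v 0%N = 0 /\ v ((n - 1) * m)%N = 0) ->
     (completely_positive A <-> zero_tensor A)) /\
  (* (ii): 1-based i in [2, n-1] corresponds to 0-based i in [1, n-2] *)
  ((3 <= n)%N -> completely_positive A ->
     (exists i : nat, (1 <= i)%N /\ (i <= n - 2)%N /\ v (i * m)%N = 0) ->
     0 <= v 0%N /\ 0 <= v ((n - 1) * m)%N /\
     forall idx, A idx = v 0%N * tpow m (ebasis n 0) idx
                         + v ((n - 1) * m)%N * tpow m (ebasis n (n - 1)) idx) /\
  (* (iii) *)
  (v 0%N = 0 -> (exists j : nat, (1 <= j)%N /\ (j <= m - 1)%N /\ v j != 0) ->
     ~ completely_positive A).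
Proof.
move=> m_ge2 n_ge2 _ hankelA; have m_gt0 : (0 < m)%N by lia.
split; [case=> v0 vN; split => [[r [us [_ [us_ge0 decA]]]] idx | ] | split].
- have z0 : zero_coord us 0.
    by apply: (hankel_diag_eq0 m_gt0 hankelA decA us_ge0); rewrite mul0n.
  have zN := hankel_diag_eq0 m_gt0 hankelA decA us_ge0 vN.
  have mn_ge : (n - 1 <= (m - 1) * (n - 1))%N by rewrite leq_pmull; lia.
  have := index_sum_le idx; rewrite hankelA (mul_pred_split n m_gt0) => le_sum.
  by apply: (zero_coord_pair_hankel_eq0 m_gt0 hankelA decA z0 zN); lia.
- exact: zero_tensor_completely_positive m_gt0.
- move=> n_ge3 [r [us [_ [us_ge0 decA]]]] [i [i_ge1 [i_le vi0]]].
  have zi := hankel_diag_eq0 m_gt0 hankelA decA us_ge0 vi0.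
  have zint := zero_coord_interior m_gt0 hankelA decA us_ge0 m_ge2 _ zi.
  have z1 : zero_coord us 1 by apply: zint; lia.
  have zn2 : zero_coord us (n - 2) by apply: zint; lia.
  have lt_0n : (0 < n)%N by lia.
  have lt_n1n : (n - 1 < n)%N by lia.
  split; first exact: (hankel_diag_ge0 hankelA decA us_ge0 (Ordinal lt_0n)).
  split; first exact: (hankel_diag_ge0 hankelA decA us_ge0 (Ordinal lt_n1n)).
  exact: (hankel_supported_on_ends m_gt0 hankelA decA m_ge2 n_ge3 z1 zn2).
- move=> v0 [j [j_ge1 [j_le vj]]] [r [us [_ [us_ge0 decA]]]].
  have z0 : zero_coord us 0.
    by apply: (hankel_diag_eq0 m_gt0 hankelA decA us_ge0); rewrite mul0n.
  by move: vj; rewrite (zero_coord_hankel_eq0 m_gt0 hankelA decA z0) ?eqxx //; nia.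
Qed.
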